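(* Let $\gamma:[0,l]\times[0,w)\to E_1^4$, $(s,t)\mapsto\gamma(s,t)$, be a smooth inextensible one-parameter family of partially null curves in $E_1^4$ parametrized by arclength ($\|\partial\gamma/\partial s\|\equiv1$), with Frenet frame $\{T,N,B_1,B_2\}$, curvatures $k_1,k_2$ (and $k_3\equiv0$), and write $$\frac{\partial\gamma}{\partial t}=\beta_1T+\beta_2N+\beta_3B_1+\beta_4B_2$$ with smooth scalar functions $\beta_i$. Then $$\frac{\partial k_1}{\partial t}=\frac{\partial^2\beta_2}{\partial s^2}+\frac{\partial(\beta_1k_1)}{\partial s}-\frac{\partial(\beta_4k_2)}{\partial s}-\frac{\partial\beta_4}{\partial s}k_2.$$
   Context: $E_1^4$ is $\mathbb{R}^4$ with the Lorentzian metric $\langle x,y\rangle=-x_1y_1+x_2y_2+x_3y_3+x_4y_4$ and $\|x\|=\sqrt{|\langle x,x\rangle|}$. A partially null curve is a spacelike curve whose first binormal is a null vector. For such a curve parametrized by arclength $s$, its Frenet frame $\{T,N,B_1,B_2\}$ ($T=\partial\gamma/\partial s$) satisfies $\langle T,T\rangle=\langle N,N\rangle=1$, $\langle B_1,B_1\rangle=\langle B_2,B_2\rangle=0$, $\langle B_1,B_2\rangle=1$, all other inner products zero, and the Frenet equations $T'=k_1N$, $N'=-k_1T+k_2B_1$, $B_1'=k_3B_1$, $B_2'=-k_2N-k_3B_2$, with $k_3\equiv0$. In the family, each $s\mapsto\gamma(s,t)$ is such a curve and frame and curvatures are smooth in $(s,t)$. The flow is inextensible if $\frac{\partial}{\partial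 t}\|\partial\gamma/\partial u\|=0$. *)

From Stdlib Require Import Reals List.
From Coquelicot Require Import Coquelicot.
Open Scope R_scope.

(* A vector of E_1^4 is represented by its coordinate function; only the
   coordinates 0,1,2,3 (i.e. x_1,...,x_4) are meaningful. *)
Definition V4 := nat -> R.

Definition lor (x y : V4) : R := - x 0%nat * y 0%nat + x 1%nat * y 1%nat
  + x 2%nat * y 2%nat + x 3%nat * y 3%nat.

Definition lnorm (x : V4) : R := sqrt (Rabs (lor x x)).

Definition ps (f : R -> R -> R) : R -> R -> R :=
  fun s t => Derive (fun x => f x t) s.
Definition pt (f : R -> R -> R) : R -> R -> R :=
  fun s t => Derive (fun y => f s y) t.

Definition psV (F : R -> R -> V4) : R -> R -> V4 :=
  fun s t i => ps (fun a b => F a b i) s t.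
Definition ptV (F : R -> R -> V4) : R -> R -> V4 :=
  fun s t i => pt (fun a b => F a b i) s t.

Fixpoint iter_partial (w : list bool) (f : R -> R -> R) : R -> R -> R :=
  match w with
  | nil => f
  | b :: w' => (if b then ps else pt) (iter_partial w' f)
  end.

Definition smooth_on (U : R * R -> Prop) (f : R -> R -> R) : Prop :=
  forall (w : list bool) (p : R * R), U p ->
    ex_derive (fun x => iter_partial w f x (snd p)) (fst p) /\
    ex_derive (fun y => iter_partial w f (fst p) y) (snd p) /\
    continuous (fun q : R * R => iter_partial w f (fst q) (snd q)) p.

Definition smoothV_on (U : R * R -> Prop) (F : R -> R -> V4) : Prop :=
  forall i : nat, (i < 4)%nat -> smooth_on U (fun s t => F s t i).

Definition dom (l w : R) (s t : R) : Prop := 0 <= s <= l /\ 0 <= t < w.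

From Stdlib Require Import Reals List Lra Lia.
From Coquelicot Require Import Coquelicot.
Open Scope R_scope.

(* Along each curve k1 = <dT/ds, N>, so dk1/dt = <d/dt dT/ds, N> + k1 <N, dN/dt>,
   and the last term vanishes because N has constant length.  Commuting the
   partial derivatives, dT/dt = d/ds (dgamma/dt) is the s-derivative of the
   variation field, which the Frenet equations express in the frame: its
   N-component is b1 k1 + db2/ds - b4 k2 and its B2-component is db4/ds.
   Finally <d/ds dT/dt, N> = d/ds <dT/dt, N> - <dT/dt, -k1 T + k2 B1>, where
   <dT/dt, T> = 0 (T has unit length) and <dT/dt, B1> = db4/ds. *)

Lemma interval_step a b x del : a < b -> a <= x <= b -> 0 < del ->
  exists k, k <> 0 /\ Rabs k < del /\ a <= x + k <= b.
Proof.
intros Hab Hx Hdel.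
destruct (Rlt_or_le x b) as [Hxb|Hxb].
- exists (Rmin (del / 2) (b - x)).
  assert (0 < Rmin (del / 2) (b - x)) by (apply Rmin_case; lra).
  pose proof (Rmin_l (del / 2) (b - x)); pose proof (Rmin_r (del / 2) (b - x)).
  rewrite Rabs_pos_eq by lra; repeat split; lra.
- exists (- Rmin (del / 2) (b - a)).
  assert (0 < Rmin (del / 2) (b - a)) by (apply Rmin_case; lra).
  pose proof (Rmin_l (del / 2) (b - a)); pose proof (Rmin_r (del / 2) (b - a)).
  rewrite Rabs_Ropp, Rabs_pos_eq by lra; repeat split; lra.
Qed.

Lemma derivable_pt_lim_zero_on_interval (h : R -> R) a b x d : a < b -> a <= x <= b ->
  (forall y, a <= y <= b -> h y = 0) -> derivable_pt_lim h x d -> d = 0.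
Proof.
intros Hab Hx Hh Hd.
destruct (Req_dec d 0) as [|Hd0]; [assumption|exfalso].
assert (He : 0 < Rabs d / 2) by (pose proof (Rabs_pos_lt _ Hd0); lra).
destruct (Hd _ He) as [del Hdel].
destruct (interval_step a b x del Hab Hx (cond_pos del)) as [k [Hk0 [Hkdel Hkx]]].
specialize (Hdel k Hk0 Hkdel).
rewrite (Hh (x + k)), (Hh x) in Hdel by lra.
replace ((0 - 0) / k - d) with (- d) in Hdel by (field; exact Hk0).
rewrite Rabs_Ropp in Hdel; lra.
Qed.

Lemma Derive_ext_interval (f g : R -> R) a b x : a < b -> a <= x <= b ->
  (forall y, a <= y <= b -> f y = g y) -> ex_derive f x -> ex_derive g x ->
  Derive f x = Derive g x.
Proof.
intros Hab Hx Hfg Hf Hg.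
apply Derive_correct, is_derive_Reals in Hf, Hg.
apply Rminus_diag_uniq, (derivable_pt_lim_zero_on_interval (fun y => f y - g y) a b x);
  [assumption|assumption| |exact (derivable_pt_lim_minus _ _ _ _ _ Hf Hg)].
intros y Hy; rewrite Hfg by assumption; ring.
Qed.

Lemma smooth_on_ps_pt U f s t : open U -> smooth_on U f -> U (s, t) ->
  ps (pt f) s t = pt (ps f) s t.
Proof.
intros HUo Hf Hst; unfold ps, pt.
apply Schwarz.
- apply locally_2d_locally.
  apply (filter_imp U); [|exact (HUo _ Hst)].
  intros [u v] Huv.
  destruct (Hf nil (u, v) Huv) as [Hs [Ht _]].
  destruct (Hf (false :: nil) (u, v) Huv) as [Hts _].
  destruct (Hf (true :: nil) (u, v) Huv) as [_ [Hst' _]].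
  repeat split; assumption.
- apply continuity_2d_pt_filterlim, (Hf (true :: false :: nil) (s, t) Hst).
- apply continuity_2d_pt_filterlim, (Hf (false :: true :: nil) (s, t) Hst).
Qed.

Definition dV (X : R -> V4) (y : R) : V4 := fun i => Derive (fun z => X z i) y.

Lemma is_derive_lor (X Y : R -> V4) y :
  (forall i, (i < 4)%nat -> ex_derive (fun z => X z i) y) ->
  (forall i, (i < 4)%nat -> ex_derive (fun z => Y z i) y) ->
  is_derive (fun z => lor (X z) (Y z)) y (lor (dV X y) (Y y) + lor (X y) (dV Y y)).
Proof.
intros HX HY.
assert (D : forall i, (i < 4)%nat -> is_derive (fun z => X z i * Y z i) y
    (dV X y i * Y y i + X y i * dV Y y i))
  by (intros i Hi; apply Derive.is_derive_mult; apply Derive_correct; [apply HX|apply HY]; exact Hi).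
pose proof (is_derive_plus _ _ _ _ _ (is_derive_plus _ _ _ _ _ (is_derive_plus _ _ _ _ _
  (is_derive_opp _ _ _ (D 0%nat ltac:(lia))) (D 1%nat ltac:(lia)))
  (D 2%nat ltac:(lia))) (D 3%nat ltac:(lia))) as DX.
match type of DX with is_derive _ _ ?d =>
  replace (lor (dV X y) (Y y) + lor (X y) (dV Y y)) with d
    by (unfold lor, plus, opp; simpl; ring) end.
revert DX; apply is_derive_ext; intros z; unfold lor, plus, opp; simpl; ring.
Qed.

Lemma lor_sym X Y : lor X Y = lor Y X.
Proof. unfold lor; ring. Qed.

Lemma lor_ext X X' Y Y' : (forall i, (i < 4)%nat -> X i = X' i) ->
  (forall i, (i < 4)%nat -> Y i = Y' i) -> lor X Y = lor X' Y'.
Proof. intros HX HY; unfold lor; rewrite !HX, !HY by lia; reflexivity. Qed.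

Lemma lor_scal_l a (X Y : V4) : lor (fun i => a * X i) Y = a * lor X Y.
Proof. unfold lor; ring. Qed.

Lemma lor_comb2_l a b (X Y V : V4) :
  lor (fun i => a * X i + b * Y i) V = a * lor X V + b * lor Y V.
Proof. unfold lor; ring. Qed.

Definition frame_comb (a b c d : R) (X Y Z W : V4) : V4 :=
  fun i => a * X i + b * Y i + c * Z i + d * W i.

Lemma lor_frame_comb_l a b c d (X Y Z W V : V4) :
  lor (frame_comb a b c d X Y Z W) V = a * lor X V + b * lor Y V + c * lor Z V + d * lor W V.
Proof. unfold lor, frame_comb; ring. Qed.

Lemma is_derive_frame_comb (a b c d : R -> R) (X Y Z W : R -> V4) y i :
  ex_derive a y -> ex_derive b y -> ex_derive c y -> ex_derive d y ->
  ex_derive (fun z => X z i) y -> ex_derive (fun z => Y z i) y ->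
  ex_derive (fun z => Z z i) y -> ex_derive (fun z => W z i) y ->
  is_derive (fun z => frame_comb (a z) (b z) (c z) (d z) (X z) (Y z) (Z z) (W z) i) y
    (frame_comb (Derive a y) (Derive b y) (Derive c y) (Derive d y) (X y) (Y y) (Z y) (W y) i
     + frame_comb (a y) (b y) (c y) (d y) (dV X y) (dV Y y) (dV Z y) (dV W y) i).
Proof.
intros Ha Hb Hc Hd HX HY HZ HW.
apply Derive_correct in Ha, Hb, Hc, Hd, HX, HY, HZ, HW.
pose proof (is_derive_plus _ _ _ _ _ (is_derive_plus _ _ _ _ _ (is_derive_plus _ _ _ _ _
  (Derive.is_derive_mult _ _ _ _ _ Ha HX) (Derive.is_derive_mult _ _ _ _ _ Hb HY))
  (Derive.is_derive_mult _ _ _ _ _ Hc HZ)) (Derive.is_derive_mult _ _ _ _ _ Hd HW)) as D.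
match type of D with is_derive _ _ ?e =>
  replace (frame_comb _ _ _ _ _ _ _ _ i + frame_comb _ _ _ _ _ _ _ _ i) with e
    by (unfold frame_comb, dV, plus; simpl; ring) end.
exact D.
Qed.

Lemma lor_dV_self_const (X : R -> V4) c a b y : a < b -> a <= y <= b ->
  (forall z, a <= z <= b -> lor (X z) (X z) = c) ->
  (forall i, (i < 4)%nat -> ex_derive (fun z => X z i) y) ->
  lor (X y) (dV X y) = 0.
Proof.
intros Hab Hy Hc HX.
pose proof (is_derive_lor X X y HX HX) as D.
assert (Dc : Derive (fun z => lor (X z) (X z)) y = 0).
{ rewrite (Derive_ext_interval _ (fun _ => c) a b y Hab Hy Hc), Derive_const.
  - reflexivity.
  - exact (ex_intro _ _ D).
  - apply ex_derive_const. }
pose proof (eq_trans (eq_sym (is_derive_unique _ _ _ D)) Dc) as E.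
rewrite (lor_sym (dV X y)) in E; lra.
Qed.

Section InextensibleFamily.

Variables (l w : R) (U : R * R -> Prop).
Variables (gamma T N B1 B2 : R -> R -> V4).
Variables (k1 k2 beta1 beta2 beta3 beta4 : R -> R -> R).

Hypothesis Hl : 0 < l.
Hypothesis HUo : open U.
Hypothesis HU : forall s t, dom l w s t -> U (s, t).
Hypotheses (Hsg : smoothV_on U gamma) (HsT : smoothV_on U T) (HsN : smoothV_on U N)
  (HsB1 : smoothV_on U B1) (HsB2 : smoothV_on U B2).
Hypotheses (Hsk1 : smooth_on U k1) (Hsk2 : smooth_on U k2)
  (Hsb1 : smooth_on U beta1) (Hsb2 : smooth_on U beta2)
  (Hsb3 : smooth_on U beta3) (Hsb4 : smooth_on U beta4).

Hypothesis HT : forall s t i, dom l w s t -> (i < 4)%nat -> T s t i = psV gamma s t i.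

Hypotheses
  (HTT : forall s t, dom l w s t -> lor (T s t) (T s t) = 1)
  (HNN : forall s t, dom l w s t -> lor (N s t) (N s t) = 1)
  (HB1B1 : forall s t, dom l w s t -> lor (B1 s t) (B1 s t) = 0)
  (HB1B2 : forall s t, dom l w s t -> lor (B1 s t) (B2 s t) = 1)
  (HTN : forall s t, dom l w s t -> lor (T s t) (N s t) = 0)
  (HTB1 : forall s t, dom l w s t -> lor (T s t) (B1 s t) = 0)
  (HNB1 : forall s t, dom l w s t -> lor (N s t) (B1 s t) = 0)
  (HNB2 : forall s t, dom l w s t -> lor (N s t) (B2 s t) = 0).

Hypotheses
  (HFT : forall s t i, dom l w s t -> (i < 4)%nat -> psV T s t i = k1 s t * N s t i)
  (HFN : forall s t i, dom l w s t -> (i < 4)%nat ->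
     psV N s t i = - k1 s t * T s t i + k2 s t * B1 s t i)
  (HFB1 : forall s t i, dom l w s t -> (i < 4)%nat -> psV B1 s t i = 0)
  (HFB2 : forall s t i, dom l w s t -> (i < 4)%nat -> psV B2 s t i = - k2 s t * N s t i).

Hypothesis Hvar : forall s t i, dom l w s t -> (i < 4)%nat ->
  ptV gamma s t i = frame_comb (beta1 s t) (beta2 s t) (beta3 s t) (beta4 s t)
                      (T s t) (N s t) (B1 s t) (B2 s t) i.

Lemma smooth_ex_derive_s wd f s t : smooth_on U f -> dom l w s t ->
  ex_derive (fun x => iter_partial wd f x t) s.
Proof. intros Hf Hd; exact (proj1 (Hf wd (s, t) (HU s t Hd))). Qed.

Lemma smooth_ex_derive_t wd f s t : smooth_on U f -> dom l w s t ->
  ex_derive (fun y => iter_partial wd f s y) t.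
Proof. intros Hf Hd; exact (proj1 (proj2 (Hf wd (s, t) (HU s t Hd)))). Qed.

Lemma ps_ext_dom (f g : R -> R -> R) s t : dom l w s t ->
  (forall a, dom l w a t -> f a t = g a t) ->
  ex_derive (fun a => f a t) s -> ex_derive (fun a => g a t) s -> ps f s t = ps g s t.
Proof.
intros [Hs Ht] Hfg; apply (Derive_ext_interval _ _ 0 l); [exact Hl|exact Hs|].
intros a Ha; apply Hfg; split; assumption.
Qed.

Lemma pt_ext_dom (f g : R -> R -> R) s t : dom l w s t ->
  (forall b, dom l w s b -> f s b = g s b) ->
  ex_derive (fun b => f s b) t -> ex_derive (fun b => g s b) t -> pt f s t = pt g s t.
Proof.
intros [Hs Ht] Hfg; apply (Derive_ext_interval _ _ t ((t + w) / 2)); [lra|lra|].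
intros b Hb; apply Hfg; split; [assumption|lra].
Qed.

Lemma lor_ptV_self_const (F : R -> R -> V4) c s t : smoothV_on U F ->
  (forall s t, dom l w s t -> lor (F s t) (F s t) = c) -> dom l w s t ->
  lor (F s t) (ptV F s t) = 0.
Proof.
intros HF Hc [Hs Ht].
apply (lor_dV_self_const (fun y => F s y) c t ((t + w) / 2)); [lra|lra| |].
- intros b Hb; apply Hc; split; [assumption|lra].
- intros i Hi; exact (smooth_ex_derive_t nil _ s t (HF i Hi) (conj Hs Ht)).
Qed.

Lemma k1_lor s t : dom l w s t -> k1 s t = lor (psV T s t) (N s t).
Proof.
intros Hd.
rewrite (lor_ext _ (fun i => k1 s t * N s t i) _ (N s t)).
- rewrite lor_scal_l, HNN by exact Hd; ring.
- intros i Hi; exact (HFT s t i Hd Hi).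
- reflexivity.
Qed.

Lemma ptV_T_frame s t i : dom l w s t -> (i < 4)%nat ->
  ptV T s t i = frame_comb (ps beta1 s t - beta2 s t * k1 s t)
    (beta1 s t * k1 s t + ps beta2 s t - beta4 s t * k2 s t)
    (ps beta3 s t + beta2 s t * k2 s t) (ps beta4 s t)
    (T s t) (N s t) (B1 s t) (B2 s t) i.
Proof.
intros Hd Hi.
assert (Dvar : is_derive (fun a => frame_comb (beta1 a t) (beta2 a t) (beta3 a t) (beta4 a t)
    (T a t) (N a t) (B1 a t) (B2 a t) i) s
  (frame_comb (ps beta1 s t) (ps beta2 s t) (ps beta3 s t) (ps beta4 s t)
     (T s t) (N s t) (B1 s t) (B2 s t) i
   + frame_comb (beta1 s t) (beta2 s t) (beta3 s t) (beta4 s t)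
     (psV T s t) (psV N s t) (psV B1 s t) (psV B2 s t) i)).
{ pose proof (is_derive_frame_comb (fun a => beta1 a t) (fun a => beta2 a t)
    (fun a => beta3 a t) (fun a => beta4 a t) (fun a => T a t) (fun a => N a t)
    (fun a => B1 a t) (fun a => B2 a t) s i) as D.
  exact (D (smooth_ex_derive_s nil _ s t Hsb1 Hd) (smooth_ex_derive_s nil _ s t Hsb2 Hd)
    (smooth_ex_derive_s nil _ s t Hsb3 Hd) (smooth_ex_derive_s nil _ s t Hsb4 Hd)
    (smooth_ex_derive_s nil _ s t (HsT i Hi) Hd) (smooth_ex_derive_s nil _ s t (HsN i Hi) Hd)
    (smooth_ex_derive_s nil _ s t (HsB1 i Hi) Hd) (smooth_ex_derive_s nil _ s t (HsB2 i Hi) Hd)). }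
transitivity (pt (ps (fun a b => gamma a b i)) s t).
{ apply pt_ext_dom; [exact Hd| |exact (smooth_ex_derive_t nil _ s t (HsT i Hi) Hd)
    |exact (smooth_ex_derive_t (true :: nil) _ s t (Hsg i Hi) Hd)].
  intros b Hb; exact (HT s b i Hb Hi). }
rewrite <- (smooth_on_ps_pt U _ s t HUo (Hsg i Hi) (HU s t Hd)).
transitivity (ps (fun a b => frame_comb (beta1 a b) (beta2 a b) (beta3 a b) (beta4 a b)
    (T a b) (N a b) (B1 a b) (B2 a b) i) s t).
{ apply ps_ext_dom; [exact Hd| |exact (smooth_ex_derive_s (false :: nil) _ s t (Hsg i Hi) Hd)
    |exact (ex_intro _ _ Dvar)].
  intros a Ha; exact (Hvar a t i Ha Hi). }
etransitivity; [exact (is_derive_unique _ _ _ Dvar)|].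
unfold frame_comb; rewrite HFT, HFN, HFB1, HFB2 by assumption; ring.
Qed.

Lemma lor_ptV_T_N s t : dom l w s t ->
  lor (ptV T s t) (N s t) = beta1 s t * k1 s t + ps beta2 s t - beta4 s t * k2 s t.
Proof.
intros Hd.
rewrite (lor_ext _ _ (N s t) (N s t) (fun i Hi => ptV_T_frame s t i Hd Hi) (fun _ _ => eq_refl)).
rewrite lor_frame_comb_l, (lor_sym (B1 s t)), (lor_sym (B2 s t)), HTN, HNN, HNB1, HNB2
  by exact Hd; ring.
Qed.

Lemma lor_ptV_T_B1 s t : dom l w s t -> lor (ptV T s t) (B1 s t) = ps beta4 s t.
Proof.
intros Hd.
rewrite (lor_ext _ _ (B1 s t) (B1 s t) (fun i Hi => ptV_T_frame s t i Hd Hi) (fun _ _ => eq_refl)).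
rewrite lor_frame_comb_l, (lor_sym (B2 s t)), HTB1, HNB1, HB1B1, HB1B2 by exact Hd; ring.
Qed.

Lemma pt_k1_lor s t : dom l w s t -> pt k1 s t = lor (psV (ptV T) s t) (N s t).
Proof.
intros Hd.
assert (DTs : forall i, (i < 4)%nat -> ex_derive (fun y => psV T s y i) t)
  by (intros i Hi; exact (smooth_ex_derive_t (true :: nil) _ s t (HsT i Hi) Hd)).
assert (DN : forall i, (i < 4)%nat -> ex_derive (fun y => N s y i) t)
  by (intros i Hi; exact (smooth_ex_derive_t nil _ s t (HsN i Hi) Hd)).
pose proof (is_derive_lor (fun y => psV T s y) (fun y => N s y) t DTs DN) as D.
transitivity (pt (fun a b => lor (psV T a b) (N a b)) s t).
{ apply pt_ext_dom; [exact Hd|exact (k1_lor s)|exact (smooth_ex_derive_t nil _ s t Hsk1 Hd)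
    |exact (ex_intro _ _ D)]. }
etransitivity; [exact (is_derive_unique _ _ _ D)|cbv beta].
assert (Hcomm : forall i, (i < 4)%nat -> dV (fun y => psV T s y) t i = psV (ptV T) s t i)
  by (intros i Hi; symmetry; exact (smooth_on_ps_pt U _ s t HUo (HsT i Hi) (HU s t Hd))).
rewrite (lor_ext _ _ (N s t) (N s t) Hcomm (fun _ _ => eq_refl)).
rewrite (lor_ext _ (fun i => k1 s t * N s t i) (dV (fun y => N s y) t) (ptV N s t)
  (fun i Hi => HFT s t i Hd Hi) (fun _ _ => eq_refl)).
rewrite lor_scal_l, (lor_ptV_self_const N 1 s t HsN HNN Hd); ring.
Qed.

Lemma is_derive_s_normal_coeff s t : dom l w s t ->
  is_derive (fun a => beta1 a t * k1 a t + ps beta2 a t - beta4 a t * k2 a t) s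
    (ps (fun a b => beta1 a b * k1 a b) s t + ps (ps beta2) s t
     - ps (fun a b => beta4 a b * k2 a b) s t).
Proof.
intros Hd.
pose proof (Derive_correct _ _ (ex_derive_mult _ _ _
  (smooth_ex_derive_s nil _ s t Hsb1 Hd) (smooth_ex_derive_s nil _ s t Hsk1 Hd))) as D1.
pose proof (Derive_correct _ _ (smooth_ex_derive_s (true :: nil) _ s t Hsb2 Hd)) as D2.
pose proof (Derive_correct _ _ (ex_derive_mult _ _ _
  (smooth_ex_derive_s nil _ s t Hsb4 Hd) (smooth_ex_derive_s nil _ s t Hsk2 Hd))) as D3.
exact (is_derive_minus _ _ _ _ _ (is_derive_plus _ _ _ _ _ D1 D2) D3).
Qed.

Lemma lor_psV_ptV_T_N s t : dom l w s t ->
  lor (psV (ptV T) s t) (N s t) =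
    ps (fun a b => beta1 a b * k1 a b) s t + ps (ps beta2) s t
    - ps (fun a b => beta4 a b * k2 a b) s t - k2 s t * ps beta4 s t.
Proof.
intros Hd.
assert (DP : forall i, (i < 4)%nat -> ex_derive (fun a => ptV T a t i) s)
  by (intros i Hi; exact (smooth_ex_derive_s (false :: nil) _ s t (HsT i Hi) Hd)).
assert (DN : forall i, (i < 4)%nat -> ex_derive (fun a => N a t i) s)
  by (intros i Hi; exact (smooth_ex_derive_s nil _ s t (HsN i Hi) Hd)).
pose proof (is_derive_lor (fun a => ptV T a t) (fun a => N a t) s DP DN) as D.
pose proof (is_derive_s_normal_coeff s t Hd) as DcN.
assert (Hprod : ps (fun a b => lor (ptV T a b) (N a b)) s t =
    ps (fun a b => beta1 a b * k1 a b + ps beta2 a b - beta4 a b * k2 a b) s t)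
  by (apply ps_ext_dom; [exact Hd|intros a Ha; exact (lor_ptV_T_N a t Ha)
    |exact (ex_intro _ _ D)|exact (ex_intro _ _ DcN)]).
assert (HN : lor (ptV T s t) (psV N s t) = k2 s t * ps beta4 s t).
{ rewrite (lor_ext _ _ _ (fun i => - k1 s t * T s t i + k2 s t * B1 s t i)
    (fun _ _ => eq_refl) (fun i Hi => HFN s t i Hd Hi)).
  rewrite lor_sym, lor_comb2_l, (lor_ptV_self_const T 1 s t HsT HTT Hd),
    (lor_sym (B1 s t)), (lor_ptV_T_B1 s t Hd); ring. }
pose proof (eq_trans (eq_trans (eq_sym (is_derive_unique _ _ _ D)) Hprod)
  (is_derive_unique _ _ _ DcN)) as E; cbv beta in E.
change (dV (fun a => ptV T a t) s) with (psV (ptV T) s t) in E.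
change (dV (fun a => N a t) s) with (psV N s t) in E.
rewrite HN in E; lra.
Qed.

Lemma pt_k1_variation s t : dom l w s t ->
  pt k1 s t = ps (ps beta2) s t + ps (fun a b => beta1 a b * k1 a b) s t
    - ps (fun a b => beta4 a b * k2 a b) s t - ps beta4 s t * k2 s t.
Proof. intros Hd; rewrite (pt_k1_lor s t Hd), (lor_psV_ptV_T_N s t Hd); ring. Qed.

End InextensibleFamily.

Theorem theorem3p6
  (l w : R) (Hl : 0 < l) (Hw : 0 < w)
  (U : R * R -> Prop) (HUo : open U)
  (HU : forall s t, dom l w s t -> U (s, t))
  (gamma T N B1 B2 : R -> R -> V4)
  (k1 k2 k3 beta1 beta2 beta3 beta4 : R -> R -> R)
  (* smoothness of the family, its frame, curvatures and the beta_i *)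
  (Hsg : smoothV_on U gamma)
  (HsT : smoothV_on U T) (HsN : smoothV_on U N)
  (HsB1 : smoothV_on U B1) (HsB2 : smoothV_on U B2)
  (Hsk1 : smooth_on U k1) (Hsk2 : smooth_on U k2) (Hsk3 : smooth_on U k3)
  (Hsb1 : smooth_on U beta1) (Hsb2 : smooth_on U beta2)
  (Hsb3 : smooth_on U beta3) (Hsb4 : smooth_on U beta4)
  (* arclength parametrization and inextensibility *)
  (Harc : forall s t, dom l w s t -> lnorm (psV gamma s t) = 1)
  (Hinext : forall s t, dom l w s t ->
     pt (fun a b => lnorm (psV gamma a b)) s t = 0)
  (* T = d gamma / ds *)
  (HT : forall s t i, dom l w s t -> (i < 4)%nat -> T s t i = psV gamma s t i)
  (* inner products of the frame *)
  (HTT : forall s t, dom l w s t -> lor (T s t) (T s t) = 1)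
  (HNN : forall s t, dom l w s t -> lor (N s t) (N s t) = 1)
  (HB1B1 : forall s t, dom l w s t -> lor (B1 s t) (B1 s t) = 0)
  (HB2B2 : forall s t, dom l w s t -> lor (B2 s t) (B2 s t) = 0)
  (HB1B2 : forall s t, dom l w s t -> lor (B1 s t) (B2 s t) = 1)
  (HTN : forall s t, dom l w s t -> lor (T s t) (N s t) = 0)
  (HTB1 : forall s t, dom l w s t -> lor (T s t) (B1 s t) = 0)
  (HTB2 : forall s t, dom l w s t -> lor (T s t) (B2 s t) = 0)
  (HNB1 : forall s t, dom l w s t -> lor (N s t) (B1 s t) = 0)
  (HNB2 : forall s t, dom l w s t -> lor (N s t) (B2 s t) = 0)
  (* Frenet equations, with k3 = 0 *)
  (Hk3 : forall s t, dom l w s t -> k3 s t = 0)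
  (HFT : forall s t i, dom l w s t -> (i < 4)%nat ->
     psV T s t i = k1 s t * N s t i)
  (HFN : forall s t i, dom l w s t -> (i < 4)%nat ->
     psV N s t i = - k1 s t * T s t i + k2 s t * B1 s t i)
  (HFB1 : forall s t i, dom l w s t -> (i < 4)%nat ->
     psV B1 s t i = k3 s t * B1 s t i)
  (HFB2 : forall s t i, dom l w s t -> (i < 4)%nat ->
     psV B2 s t i = - k2 s t * N s t i - k3 s t * B2 s t i)
  (* variation vector field *)
  (Hvar : forall s t i, dom l w s t -> (i < 4)%nat ->
     ptV gamma s t i = beta1 s t * T s t i + beta2 s t * N s t i
                       + beta3 s t * B1 s t i + beta4 s t * B2 s t i) :
  forall s t, dom l w s t ->
    pt k1 s t =
      ps (ps beta2) s t
      + ps (fun a b => beta1 a b * k1 a b) s t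
      - ps (fun a b => beta4 a b * k2 a b) s t
      - ps beta4 s t * k2 s t.
Proof.
assert (HFB1' : forall s t i, dom l w s t -> (i < 4)%nat -> psV B1 s t i = 0)
  by (intros s t i Hd Hi; rewrite HFB1, Hk3 by assumption; ring).
assert (HFB2' : forall s t i, dom l w s t -> (i < 4)%nat -> psV B2 s t i = - k2 s t * N s t i)
  by (intros s t i Hd Hi; rewrite HFB2, Hk3 by assumption; ring).
intros s t Hd.
exact (pt_k1_variation l w U gamma T N B1 B2 k1 k2 beta1 beta2 beta3 beta4 Hl HUo HU
  Hsg HsT HsN HsB1 HsB2 Hsk1 Hsk2 Hsb1 Hsb2 Hsb3 Hsb4 HT HTT HNN HB1B1 HB1B2
  HTN HTB1 HNB1 HNB2 HFT HFN HFB1' HFB2' Hvar s t Hd).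
Qed.
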